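(* Let $d\ge 2$ and $n\ge 1$ be integers and let $M_x=\{|\phi_x^a\rangle: a=1,\ldots,d\}$, $x=1,\ldots,n$, be a set of mutually unbiased orthonormal bases of $\mathbb{C}^d$. Define the steering functional $F=\{F_x^a\}$ by $F_x^a=|\phi_x^a\rangle\langle\phi_x^a|$ for $x=1,\ldots,n$, $a=1,\ldots,d$. Then $$V(F)\ \ge\ \frac{n\sqrt{d}}{n+1+\sqrt{d}}.$$
   Context: Two orthonormal bases $\{|\phi_1^a\rangle\}_{a=1}^d$, $\{|\phi_2^b\rangle\}_{b=1}^d$ of $\mathbb{C}^d$ are mutually unbiased if $|\langle\phi_1^a|\phi_2^b\rangle|=1/\sqrt{d}$ for all $a,b$; a set of bases is a set of MUBs if every two distinct bases in it are mutually unbiased. An $(n,m,d)$-assemblage is a family $\sigma=\{\sigma_x^a: x=1,\ldots,n,\ a=1,\ldots,m\}$ of positive semidefinite operators on $\mathbb{C}^d$ such that $\sum_a\sigma_x^a$ does not depend on $x$ and has trace $1$; $\mathcal{Q}$ is the set of all such assemblages. An assemblage has a local hidden state (LHS) model if there exist a finite index set $\Lambda$, weights $q_\lambda\ge0$ with $\sum_\lambda q_\lambda=1$, density matrices $\sigma_\lambda$ on $\mathbb{C}^d$, and probability distributions $\{p_\lambda(a|x)\}_a$ for each $x,\lambda$, such that $\sigma_x^a=\sum_{\lambda}q_\lambda p_\lambda(a|x)\sigma_\lambda$ for all $x,a$; $\mathcal{L}$ is the set of such assemblages. For a steering functional $F=\{F_x^a\}$ (a family of $d\times d$ matrices), $\langle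 F,\sigma\rangle=\mathrm{Tr}\big(\sum_{x,a}F_x^a\sigma_x^a\big)$, $S_{LHS}(F)=\sup\{|\langle F,\sigma\rangle|:\sigma\in\mathcal{L}\}$, $S_Q(F)=\sup\{|\langle F,\sigma\rangle|:\sigma\in\mathcal{Q}\}$, and the quantum violation is $V(F)=S_Q(F)/S_{LHS}(F)$. *)

From HB Require Import structures.
From mathcomp Require Import all_boot all_order all_algebra.
From mathcomp Require Import complex.
From mathcomp Require Import boolp classical_sets reals.
Set Implicit Arguments. Unset Strict Implicit. Unset Printing Implicit Defensive.
Import Order.TTheory GRing.Theory Num.Theory.
Local Open Scope ring_scope.
Local Open Scope complex_scope.

Section Steering.
Variable R : realType.
Local Notation C := R[i].

Definition adjmx (m k : nat) (A : 'M[C]_(m, k)) : 'M[C]_(k, m) :=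
  (map_mx Num.conj A)^T.

Definition psd (d : nat) (A : 'M[C]_d) : Prop :=
  adjmx A = A /\ forall v : 'cV[C]_d, 0 <= (adjmx v *m A *m v) 0 0.

Definition density (d : nat) (rho : 'M[C]_d) : Prop :=
  psd rho /\ \tr rho = 1.

Definition assemblage (n m d : nat) (sigma : 'I_n -> 'I_m -> 'M[C]_d) : Prop :=
  (forall x a, psd (sigma x a)) /\
  exists rho : 'M[C]_d, (forall x, \sum_(a < m) sigma x a = rho) /\ \tr rho = 1.

(* LHS model with finite hidden-variable set 'I_k *)
Definition has_LHS (n m d : nat) (sigma : 'I_n -> 'I_m -> 'M[C]_d) : Prop :=
  exists (k : nat) (q : 'I_k -> R) (rho : 'I_k -> 'M[C]_d)
         (p : 'I_k -> 'I_n -> 'I_m -> R),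
    (forall l, 0 <= q l) /\ \sum_(l < k) q l = 1 /\
    (forall l, density (rho l)) /\
    (forall l x a, 0 <= p l x a) /\ (forall l x, \sum_(a < m) p l x a = 1) /\
    (forall x a, sigma x a = \sum_(l < k) ((q l * p l x a)%:C *: rho l)).

Definition pairing (n m d : nat) (F sigma : 'I_n -> 'I_m -> 'M[C]_d) : C :=
  \tr (\sum_(x < n) \sum_(a < m) (F x a *m sigma x a)).

Definition S_LHS (n m d : nat) (F : 'I_n -> 'I_m -> 'M[C]_d) : R :=
  sup [set r : R | exists sigma, has_LHS sigma /\ r = Normc.normc (pairing F sigma)].

Definition S_Q (n m d : nat) (F : 'I_n -> 'I_m -> 'M[C]_d) : R :=
  sup [set r : R | exists sigma, assemblage sigma /\ r = Normc.normc (pairing F sigma)].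

Definition violation (n m d : nat) (F : 'I_n -> 'I_m -> 'M[C]_d) : R :=
  S_Q F / S_LHS F.

Definition orthonormal_basis (d : nat) (phi : 'I_d -> 'cV[C]_d) : Prop :=
  forall a b, (adjmx (phi a) *m phi b) 0 0 = (a == b)%:R.

Definition mutually_unbiased (d : nat) (phi psi : 'I_d -> 'cV[C]_d) : Prop :=
  forall a b, Normc.normc ((adjmx (phi a) *m psi b) 0 0) = 1 / Num.sqrt (d%:R).

End Steering.

(* The quantum value is n: the assemblage sigma_x^a = |phi_x^a><phi_x^a| / d
   attains it, and sum_a <phi_x^a|sigma_x^a|phi_x^a> <= tr sum_a sigma_x^a = 1.
   For an LHS model the pairing is a convex combination, over hidden states rho
   and deterministic choices a(x), of tr (rho Q) with Q = sum_x |u_x><u_x| the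
   frame operator of the unit vectors u_x = phi_x^(a(x)), which satisfy
   |<u_x|u_y>| = 1/sqrt d for x <> y.  Summing the positive operators
   |w_xy><w_xy|, w_xy = u_x - sqrt d <u_y|u_x> u_y, gives the Gershgorin-type
   estimate Q^2 <= lam Q with lam = 1 + (n - 1)/sqrt d, and then
   lam - Q = lam (1 - Q/lam)^2 + (lam Q - Q^2)/lam >= 0.  Hence
   V(F) >= n / lam = n sqrt d / (n - 1 + sqrt d). *)

From HB Require Import structures.
From mathcomp Require Import all_boot all_order all_algebra.
From mathcomp Require Import complex.
From mathcomp Require Import boolp classical_sets reals.
From mathcomp Require Import ring lra.
Import Order.TTheory GRing.Theory Num.Theory.
Set Implicit Arguments. Unset Strict Implicit. Unset Printing Implicit Defensive.
Local Open Scope ring_scope.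

Section Adjoint.
Variable R : realType.
Local Notation C := R[i].

Fact adjmx_is_nmod_morphism m k : nmod_morphism (@adjmx R m k).
Proof.
by split=> [|A B]; apply/matrixP=> i j; rewrite !mxE ?rmorph0 ?rmorphD.
Qed.

HB.instance Definition _ m k :=
  GRing.isNmodMorphism.Build 'M[C]_(m, k) 'M[C]_(k, m) (@adjmx R m k)
    (@adjmx_is_nmod_morphism m k).

Lemma adjmxZ m k (c : C) (A : 'M[C]_(m, k)) : adjmx (c *: A) = c^* *: adjmx A.
Proof. by apply/matrixP=> i j; rewrite !mxE rmorphM. Qed.

Lemma adjmxM m k l (A : 'M[C]_(m, k)) (B : 'M[C]_(k, l)) :
  adjmx (A *m B) = adjmx B *m adjmx A.
Proof. by rewrite /adjmx map_mxM trmx_mul. Qed.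

Lemma adjmxK m k (A : 'M[C]_(m, k)) : adjmx (adjmx A) = A.
Proof. by apply/matrixP=> i j; rewrite !mxE conjCK. Qed.

Lemma adjmx1 k : adjmx (1%:M : 'M[C]_k) = 1%:M.
Proof. by apply/matrixP=> i j; rewrite !mxE (eq_sym j i) conjC_nat. Qed.

Definition cdot d (u v : 'cV[C]_d) : C := (adjmx u *m v) 0 0.

Lemma conj_cdot d (u v : 'cV[C]_d) : (cdot u v)^* = cdot v u.
Proof.
rewrite /cdot !mxE rmorph_sum; apply: eq_bigr => i _.
by rewrite !mxE rmorphM /= conjCK mulrC.
Qed.

Lemma mxtrace_outer d (u v : 'cV[C]_d) : \tr (u *m adjmx v) = cdot v u.
Proof. by rewrite mxtrace_mulC trace_mx11. Qed.

Lemma mul_outer d (u v w z : 'cV[C]_d) :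
  (u *m adjmx v) *m (w *m adjmx z) = cdot v w *: (u *m adjmx z).
Proof.
by rewrite mulmxA -(mulmxA u) [adjmx v *m w]mx11_scalar mul_mx_scalar -scalemxAl.
Qed.

Lemma adjmx_outer d (u v : 'cV[C]_d) : adjmx (u *m adjmx v) = v *m adjmx u.
Proof. by rewrite adjmxM adjmxK. Qed.

Lemma psd_outer d (u : 'cV[C]_d) : psd (u *m adjmx u).
Proof.
split=> [|v]; first exact: adjmx_outer.
rewrite mulmxA -mulmxA [adjmx v *m u]mx11_scalar mul_scalar_mx mxE.
by rewrite -/(cdot v u) -/(cdot u v) -conj_cdot mulrC mul_conjC_ge0.
Qed.

Lemma psdZ d (c : C) (A : 'M[C]_d) : 0 <= c -> psd A -> psd (c *: A).
Proof.
move=> c_ge0 [AH A_ge0]; split=> [|v]; first by rewrite adjmxZ AH conj_Creal ?ger0_real.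
by rewrite -scalemxAr -scalemxAl mxE mulr_ge0.
Qed.

Lemma sum_outer_onb d (phi : 'I_d -> 'cV[C]_d) :
  orthonormal_basis phi -> \sum_a phi a *m adjmx (phi a) = 1%:M.
Proof.
move=> phi_onb; set U : 'M[C]_d := \matrix_(i, a) phi a i 0.
have /mulmx1C UU : adjmx U *m U = 1%:M.
  apply/matrixP=> a b; rewrite [RHS]mxE -(phi_onb a b) !mxE.
  by apply: eq_bigr => i _; rewrite !mxE.
rewrite -UU; apply/matrixP=> i j; rewrite !mxE summxE.
by apply: eq_bigr => a _; rewrite !mxE big_ord1 !mxE.
Qed.

End Adjoint.

Section Expectation.
Variable R : realType.
Local Notation C := R[i].

Definition expect d (rho A : 'M[C]_d) : C := \tr (A *m rho).

Fact expect_is_scalar d (rho : 'M[C]_d) : scalar (expect rho).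
Proof. by move=> c A B; rewrite /expect mulmxDl -scalemxAl mxtraceD mxtraceZ. Qed.

HB.instance Definition _ d (rho : 'M[C]_d) :=
  GRing.isLinear.Build C 'M[C]_d C *%R (expect rho) (expect_is_scalar rho).

Lemma expect1 d (rho : 'M[C]_d) : expect rho 1%:M = \tr rho.
Proof. by rewrite /expect mul1mx. Qed.

Lemma expect_sumZ d k (c : 'I_k -> C) (rho : 'I_k -> 'M[C]_d) A :
  expect (\sum_l c l *: rho l) A = \sum_l c l * expect (rho l) A.
Proof.
rewrite /expect mulmx_sumr raddf_sum; apply: eq_bigr => l _.
by rewrite -scalemxAr; apply: mxtraceZ.
Qed.

Lemma expect_outer_ge0 d (rho : 'M[C]_d) (u : 'cV[C]_d) :
  psd rho -> 0 <= expect rho (u *m adjmx u).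
Proof. by case=> _ rho_ge0; rewrite /expect -mulmxA mxtrace_mulC trace_mx11. Qed.

Lemma expect_gram_ge0 d k (rho : 'M[C]_d) (A : 'M[C]_(d, k)) :
  psd rho -> 0 <= expect rho (A *m adjmx A).
Proof.
move=> rho_psd; have -> : A *m adjmx A = \sum_j col j A *m adjmx (col j A).
  apply/matrixP=> i i'; rewrite !mxE summxE; apply: eq_bigr => j _.
  by rewrite !mxE big_ord1 !mxE.
by rewrite raddf_sum sumr_ge0 // => j _; apply: expect_outer_ge0.
Qed.

End Expectation.

Section FrameBound.
Variable R : realType.
Local Notation C := R[i].

Lemma expect_le_of_sqr d (rho Q : 'M[C]_d) (lam : C) :
  psd rho -> adjmx Q = Q -> 0 < lam ->
  expect rho (Q *m Q) <= lam * expect rho Q -> expect rho Q <= lam * \tr rho.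
Proof.
move=> rho_psd QH lam_gt0 QQ_le; set M := 1%:M - lam^-1 *: Q.
have lamVJ : lam^-1^* = lam^-1 by rewrite conj_Creal // realV gtr0_real.
rewrite -subr_ge0 in QQ_le; rewrite -subr_ge0.
have -> : lam * \tr rho - expect rho Q = lam * expect rho (M *m adjmx M)
    + lam^-1 * (lam * expect rho Q - expect rho (Q *m Q)).
  rewrite /M raddfB /= adjmxZ adjmx1 QH lamVJ mulmxBl !mulmxBr !mul1mx mulmx1.
  rewrite -!scalemxAl -scalemxAr !raddfB /= !scalarZ /= expect1; field.
  by rewrite gt_eqF.
by rewrite addr_ge0 ?mulr_ge0 ?invr_ge0 ?expect_gram_ge0 // ltW.
Qed.

Lemma expect_cross_le d (rho : 'M[C]_d) (u v : 'cV[C]_d) (s : C) :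
  psd rho -> 0 < s -> s * `|cdot u v| = 1 ->
  s * (expect rho (u *m adjmx u *m (v *m adjmx v))
       + expect rho (v *m adjmx v *m (u *m adjmx u)))
    <= expect rho (u *m adjmx u) + expect rho (v *m adjmx v).
Proof.
move=> rho_psd s_gt0; set g := cdot u v => s_uv.
have sJ : s^* = s by rewrite conj_Creal // gtr0_real.
have gJ : g^* = cdot v u by rewrite conj_cdot.
have ss_gg : s * g^* * (s * g) = 1.
  by rewrite -(expr1n _ 2) -s_uv exprMn normCKC; ring.
set w := u - (s * g^*) *: v.
have := expect_outer_ge0 w rho_psd.
rewrite /w raddfB /= adjmxZ rmorphM /= sJ conjCK mulmxBl !mulmxBr.
rewrite -!scalemxAl -!scalemxAr !raddfB /= !scalarZ /= mulrA ss_gg mul1r.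
rewrite !mul_outer !scalarZ -/g -gJ => ww_ge0.
rewrite -subr_ge0; apply: (le_trans ww_ge0).
by rewrite le_eqVlt; apply/orP; left; apply/eqP; ring.
Qed.

Lemma sum_offdiagC (I : finType) (F : I -> I -> C) :
  \sum_x \sum_(y | y != x) F x y = \sum_x \sum_(y | y != x) F y x.
Proof.
rewrite (exchange_big_dep predT) //=; apply: eq_bigr => x _.
by apply: eq_bigl => y; rewrite eq_sym.
Qed.

Lemma sum_offdiag_const (I : finType) (F : I -> C) :
  \sum_x \sum_(y | y != x) F y = (#|I|%:R - 1) * \sum_x F x.
Proof.
rewrite (eq_bigr (fun x => \sum_y F y - F x)) => [|x _]; last first.
  by rewrite [\sum_y F y](bigD1 x) //= addrAC subrr add0r.
by rewrite sumrB sumr_const mulrBl mul1r mulr_natl.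
Qed.

Definition frame_op d n (u : 'I_n -> 'cV[C]_d) : 'M[C]_d :=
  \sum_x u x *m adjmx (u x).

Lemma frame_op_adj d n (u : 'I_n -> 'cV[C]_d) : adjmx (frame_op u) = frame_op u.
Proof. by rewrite raddf_sum; apply: eq_bigr => x _ /=; rewrite adjmx_outer. Qed.

Lemma expect_frame_sqr_le d n (rho : 'M[C]_d) (u : 'I_n -> 'cV[C]_d) (s : C) :
  psd rho -> 0 < s -> (forall x, cdot (u x) (u x) = 1) ->
  (forall x y, x != y -> s * `|cdot (u x) (u y)| = 1) ->
  expect rho (frame_op u *m frame_op u) <= (1 + (n%:R - 1) / s) * expect rho (frame_op u).
Proof.
move=> rho_psd s_gt0 u_unit u_mub; set Q := frame_op u.
pose P x := u x *m adjmx (u x).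
pose T := \sum_x expect rho (P x).
pose Z := \sum_x \sum_(y | y != x) expect rho (P x *m P y).
have QE : expect rho Q = T by rewrite raddf_sum.
have QQE : expect rho (Q *m Q) = T + Z.
  rewrite mulmx_suml raddf_sum -big_split; apply: eq_bigr => x _ /=.
  by rewrite mulmx_sumr raddf_sum (bigD1 x) //= {1}/P mul_outer u_unit scale1r.
have offT : \sum_x \sum_(y | y != x) expect rho (P y) = (n%:R - 1) * T.
  by rewrite sum_offdiag_const card_ord.
have cross_le : s * (Z + Z) <= (n%:R - 1) * T + (n%:R - 1) * T.
  rewrite -{1}offT sum_offdiagC -offT {2}/Z sum_offdiagC -big_split mulr_sumr -big_split.
  apply: ler_sum => x _; rewrite -big_split mulr_sumr -big_split.
  apply: ler_sum => y yx; apply: expect_cross_le => //.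
  by apply: u_mub; rewrite eq_sym.
have sZ_le : s * Z <= (n%:R - 1) * T by rewrite -(ler_pMn2r (n := 2)) // !mulr2n -mulrDr.
by rewrite QQE QE mulrDl mul1r lerD2l mulrAC ler_pdivlMr // mulrC.
Qed.

Lemma expect_frame_le d n (rho : 'M[C]_d) (u : 'I_n -> 'cV[C]_d) (s : C) :
  (0 < n)%N -> psd rho -> 0 < s -> (forall x, cdot (u x) (u x) = 1) ->
  (forall x y, x != y -> s * `|cdot (u x) (u y)| = 1) ->
  \sum_x expect rho (u x *m adjmx (u x)) <= (1 + (n%:R - 1) / s) * \tr rho.
Proof.
move=> n_gt0 rho_psd s_gt0 u_unit u_mub; rewrite -raddf_sum -/(frame_op u).
apply: expect_le_of_sqr; rewrite ?frame_op_adj ?expect_frame_sqr_le //.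
apply: lt_le_trans ltr01 _.
by rewrite lerDl divr_ge0 ?subr_ge0 ?ler1n // ltW.
Qed.

End FrameBound.

Section Pairing.
Variable R : realType.
Local Notation C := R[i].
Local Open Scope complex_scope.

Lemma normC_normc (z : C) : `|z| = (Normc.normc z)%:C.
Proof. by case: z. Qed.

Lemma normc_ge0E (z : C) : 0 <= z -> (Normc.normc z)%:C = z.
Proof. by rewrite -normC_normc; apply: ger0_norm. Qed.

Lemma convex_comb_le (T : numDomainType) (I : finType) (w t : I -> T) (b : T) :
  (forall i, 0 <= w i) -> \sum_i w i = 1 -> (forall i, t i <= b) ->
  \sum_i w i * t i <= b.
Proof.
move=> w_ge0 w_sum1 t_le; rewrite -[b]mul1r -w_sum1 mulr_suml.
by apply: ler_sum => i _; apply: ler_wpM2l.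
Qed.

Lemma exists_argmax_real m (a0 : 'I_m) (t : 'I_m -> C) :
  (forall a, t a \is Num.real) -> exists a1, forall a, t a <= t a1.
Proof.
move=> t_real.
have [a1 _ a1_max] := @arg_maxP _ _ _ a0 predT (fun a => complex.Re (t a)) isT.
exists a1 => a; rewrite -(RRe_real (t_real a)) -(RRe_real (t_real a1)) lecR.
exact: a1_max.
Qed.

Lemma pairingE n m d (F sigma : 'I_n -> 'I_m -> 'M[C]_d) :
  pairing F sigma = \sum_x \sum_a expect (sigma x a) (F x a).
Proof. by rewrite /pairing raddf_sum; apply: eq_bigr => x _; rewrite raddf_sum. Qed.

Lemma pairing_LHS_model n m d k (F : 'I_n -> 'I_m -> 'M[C]_d) (q : 'I_k -> R) rho p :
  pairing F (fun x a => \sum_l ((q l * p l x a)%:C *: rho l)) =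
  \sum_l (q l)%:C * \sum_x \sum_a (p l x a)%:C * expect (rho l) (F x a).
Proof.
rewrite pairingE; under eq_bigr do under eq_bigr do rewrite expect_sumZ.
under eq_bigr do rewrite exchange_big; rewrite exchange_big.
apply: eq_bigr => l _; rewrite mulr_sumr; apply: eq_bigr => x _.
by rewrite mulr_sumr; apply: eq_bigr => a _; rewrite rmorphM mulrA.
Qed.

Section SupPairing.
Variables (n m d : nat) (F : 'I_n -> 'I_m -> 'M[C]_d).
Variables (P : ('I_n -> 'I_m -> 'M[C]_d) -> Prop) (b : R).
Hypothesis pairing_bounded : forall sigma, P sigma -> 0 <= pairing F sigma <= b%:C.

Let values :=
  [set r : R | exists sigma, P sigma /\ r = Normc.normc (pairing F sigma)]%classic.

Lemma values_ub : ubound values b.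
Proof.
move=> _ [sigma [Psigma ->]]; have /andP[pair_ge0 pair_le] := pairing_bounded Psigma.
by rewrite -lecR normc_ge0E.
Qed.

Lemma sup_pairing_le : (exists sigma, P sigma) -> sup values <= b.
Proof.
move=> [sigma Psigma]; apply: ge_sup; last exact: values_ub.
by exists (Normc.normc (pairing F sigma)), sigma.
Qed.

Lemma pairing_le_sup sigma : P sigma -> Normc.normc (pairing F sigma) <= sup values.
Proof.
by move=> Psigma; apply: ub_le_sup; [exists b; apply: values_ub | exists sigma].
Qed.

End SupPairing.

End Pairing.

Section MUBSteering.
Variable R : realType.
Local Notation C := R[i].
Local Open Scope complex_scope.

Variables (d n : nat) (phi : 'I_n -> 'I_d -> 'cV[C]_d).
Hypothesis d_gt0 : (0 < d)%N.
Hypothesis phi_onb : forall x, orthonormal_basis (phi x).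
Local Notation F := (fun x a => phi x a *m adjmx (phi x a)).

Lemma cdot_onb x a : cdot (phi x a) (phi x a) = 1.
Proof. by rewrite /cdot phi_onb eqxx. Qed.

Lemma expect_onb_sum (rho : 'M[C]_d) x : \sum_a expect rho (F x a) = \tr rho.
Proof. by rewrite -raddf_sum /= (sum_outer_onb (phi_onb x)) expect1. Qed.

Lemma pairing_assemblage_bounds sigma :
  assemblage sigma -> 0 <= pairing F sigma <= (n%:R : R)%:C.
Proof.
move=> [sigma_psd [rho [sigma_sum tr_rho]]]; rewrite pairingE rmorph_nat.
apply/andP; split.
  by apply: sumr_ge0 => x _; apply: sumr_ge0 => a _; apply: expect_outer_ge0.
rewrite -[n in n%:R]card_ord -sumr_const; apply: ler_sum => x _.
rewrite -tr_rho -(sigma_sum x) raddf_sum /=; apply: ler_sum => a _.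
rewrite -expect1 -(sum_outer_onb (phi_onb x)) raddf_sum (bigD1 a) //= lerDl.
by apply: sumr_ge0 => b _; apply: expect_outer_ge0.
Qed.

Lemma S_Q_onb : S_Q F = n%:R.
Proof.
set c : C := d%:R^-1.
have c_ge0 : 0 <= c by rewrite invr_ge0 ler0n.
have dc : d%:R * c = 1 by rewrite mulfV // pnatr_eq0 -lt0n.
pose sigma x a := c *: F x a.
have sigma_ass : assemblage sigma.
  split=> [x a|]; first by apply: psdZ; [|apply: psd_outer].
  exists (c *: 1%:M); split=> [x|]; first by rewrite -scaler_sumr sum_outer_onb.
  by rewrite mxtraceZ mxtrace1 mulrC.
have pairing_sigma : pairing F sigma = (n%:R : R)%:C.
  rewrite pairingE rmorph_nat -[n in n%:R]card_ord -sumr_const.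
  apply: eq_bigr => x _; rewrite -[1]dc -[d in d%:R]card_ord -sumr_const mulr_suml.
  apply: eq_bigr => a _; rewrite /expect -scalemxAr mul_outer cdot_onb scale1r.
  by rewrite mxtraceZ mxtrace_outer cdot_onb mulr1 mul1r.
apply/le_anti/andP; split.
  by apply: sup_pairing_le pairing_assemblage_bounds _; exists sigma.
have <- : Normc.normc (pairing F sigma) = n%:R.
  by apply: complexI; rewrite normc_ge0E pairing_sigma // ler0c ler0n.
exact: pairing_le_sup pairing_assemblage_bounds _ sigma_ass.
Qed.

Hypothesis n_gt0 : (0 < n)%N.
Hypothesis phi_mub : forall x y, x != y -> mutually_unbiased (phi x) (phi y).

Let lam : R := 1 + (n%:R - 1) / Num.sqrt d%:R.

Lemma sqrt_d_gt0 : 0 < Num.sqrt (d%:R : R).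
Proof. by rewrite sqrtr_gt0 ltr0n. Qed.

Lemma mub_cdot_norm x y a b :
  x != y -> (Num.sqrt d%:R)%:C * `|cdot (phi x a) (phi y b)| = 1.
Proof.
move=> xy; rewrite normC_normc (phi_mub xy) -rmorphM mul1r mulfV ?rmorph1 //.
by rewrite gt_eqF // sqrt_d_gt0.
Qed.

Lemma expect_mub_le (rho : 'M[C]_d) (am : 'I_n -> 'I_d) :
  density rho -> \sum_x expect rho (F x (am x)) <= lam%:C.
Proof.
case=> rho_psd tr_rho.
have := expect_frame_le (u := fun x => phi x (am x)) (s := (Num.sqrt d%:R)%:C)
  n_gt0 rho_psd.
rewrite tr_rho mulr1 /lam rmorphD rmorph1 fmorph_div rmorphB rmorph_nat; apply.
- by rewrite ltcR sqrt_d_gt0.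
- by move=> x; apply: cdot_onb.
- by move=> x y; apply: mub_cdot_norm.
Qed.

Lemma pairing_LHS_bounds sigma : has_LHS sigma -> 0 <= pairing F sigma <= lam%:C.
Proof.
move=> [k [q [rho [p [q_ge0 [q_sum1 [rho_dens [p_ge0 [p_sum1 sigmaE]]]]]]]]].
have -> : sigma = fun x a => \sum_l ((q l * p l x a)%:C *: rho l).
  by apply/funext => x; apply/funext => a; apply: sigmaE.
rewrite pairing_LHS_model.
have t_ge0 l x a : 0 <= expect (rho l) (F x a).
  by apply: expect_outer_ge0; case: (rho_dens l).
have inner_bounds l :
    0 <= \sum_x \sum_a (p l x a)%:C * expect (rho l) (F x a) <= lam%:C.
  apply/andP; split.
    by apply: sumr_ge0 => x _; apply: sumr_ge0 => a _; rewrite mulr_ge0 ?ler0c.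
  have /fin_all_exists[am am_max] : forall x, exists a1 : 'I_d,
      forall a, expect (rho l) (F x a) <= expect (rho l) (F x a1).
    move=> x; apply: (exists_argmax_real (Ordinal d_gt0)) => a.
    exact: ger0_real.
  apply: le_trans (expect_mub_le am (rho_dens l)).
  apply: ler_sum => x _; apply: convex_comb_le => [a||a]; rewrite ?ler0c //.
  by rewrite -rmorph_sum p_sum1.
apply/andP; split.
  by apply: sumr_ge0 => l _; rewrite mulr_ge0 ?ler0c //; case/andP: (inner_bounds l).
apply: convex_comb_le => [l||l]; rewrite ?ler0c //; first by rewrite -rmorph_sum q_sum1.
by case/andP: (inner_bounds l).
Qed.

Lemma S_LHS_mub_bounds : 0 < S_LHS F <= lam.
Proof.
pose x0 := Ordinal n_gt0; pose a0 := Ordinal d_gt0; set c : R := d%:R^-1.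
have c_gt0 : 0 < c by rewrite invr_gt0 ltr0n.
pose sigma (x : 'I_n) (a : 'I_d) := \sum_(l < 1) ((1 * c)%:C *: F x0 a0).
have sigma_LHS : has_LHS sigma.
  exists 1%N, (fun=> 1), (fun=> F x0 a0), (fun _ _ _ => c).
  split=> [l|]; first exact: ler01.
  split; first by rewrite big_ord1.
  split=> [l|]; first by split; [apply: psd_outer | rewrite mxtrace_outer cdot_onb].
  split=> [l x a|]; first exact: ltW.
  split=> // l x; rewrite sumr_const card_ord -[_ *+ d]mulr_natl mulfV //.
  by rewrite pnatr_eq0 -lt0n.
have pairing_sigma : pairing F sigma = (n%:R * c)%:C.
  rewrite pairing_LHS_model big_ord1 rmorph1 mul1r.
  under eq_bigr do rewrite -mulr_sumr expect_onb_sum mxtrace_outer cdot_onb mulr1.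
  by rewrite sumr_const card_ord rmorphM rmorph_nat mulr_natl.
have pairing_gt0 : 0 < n%:R * c by rewrite mulr_gt0 ?ltr0n.
apply/andP; split; last first.
  by apply: sup_pairing_le pairing_LHS_bounds _; exists sigma.
apply: lt_le_trans (pairing_le_sup pairing_LHS_bounds sigma_LHS).
by rewrite -ltcR normc_ge0E pairing_sigma ?ltcR ?ler0c ?ltW.
Qed.

End MUBSteering.

Lemma ratio_lower_bound (K : realFieldType) (n s v : K) :
  1 <= n -> 0 < s -> 0 < v -> v <= 1 + (n - 1) / s ->
  n * s / (n + 1 + s) <= n / v.
Proof.
move=> n_ge1 s_gt0 v_gt0 v_le.
have lam_gt0 : 0 < 1 + (n - 1) / s := lt_le_trans v_gt0 v_le.
apply: (@le_trans _ _ (n / (1 + (n - 1) / s))); last first.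
  by rewrite ler_wpM2l ?lef_pV2 ?posrE //; lra.
have -> : n / (1 + (n - 1) / s) = n * s / (s + n - 1).
  by field; rewrite !gt_eqF //; lra.
by rewrite ler_wpM2l ?mulr_ge0 ?lef_pV2 ?posrE //; lra.
Qed.

Theorem theorem1 (R : realType) (d n : nat) (hd : (2 <= d)%N) (hn : (1 <= n)%N)
  (phi : 'I_n -> 'I_d -> 'cV[R[i]]_d)
  (hON : forall x, orthonormal_basis (phi x))
  (hMU : forall x y, x != y -> mutually_unbiased (phi x) (phi y)) :
  n%:R * Num.sqrt (d%:R) / (n%:R + 1 + Num.sqrt (d%:R))
    <= violation (fun x a => phi x a *m adjmx (phi x a)).
Proof.
have d_gt0 : (0 < d)%N := ltnW hd.
have /andP[S_LHS_gt0 S_LHS_le] := S_LHS_mub_bounds d_gt0 hON hn hMU.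
rewrite /violation S_Q_onb //.
by apply: ratio_lower_bound S_LHS_gt0 S_LHS_le; rewrite ?ler1n ?sqrt_d_gt0.
Qed.
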